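(* Let $d$ be an integer and $x$ a real number with $0<d\leqslant x$. Let $K_d$ be the largest integer $k$ such that $(k-d)k\leqslant dx$ (i.e. $K_d=\lfloor (d+\sqrt{d^2+4dx})/2\rfloor$), and let $N_d$ be the largest integer $n$ such that $n(n+1)\leqslant x/d$ (i.e. $N_d=\lfloor(-1+\sqrt{1+4x/d}\,)/2\rfloor$). Then $$\lfloor x/(K_d+1)\rfloor \leqslant N_d \leqslant \lfloor x/K_d\rfloor.$$
   Context: $\lfloor t\rfloor$ denotes the integer part of the real number $t$. *)

From Stdlib Require Import Reals ZArith Lra Lia.
Open Scope R_scope.

(* floor t = integer part of t (Int_part r = up r - 1, the floor). *)
Definition floorR (t : R) : Z := Int_part t.

Definition is_greatest_Z (P : Z -> Prop) (k : Z) : Prop :=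
  P k /\ forall m : Z, P m -> (m <= k)%Z.

From Stdlib Require Import Reals ZArith Lra Lia Psatz.
Open Scope R_scope.

(* The two maximality conditions give (K - d) K <= d x < (K + 1 - d) (K + 1)
   and N (N + 1) d <= x < (N + 1) (N + 2) d.  Comparing K with (N + 1) d, resp.
   K + 1 with (N + 2) d, these combine to N K <= x < (N + 1) (K + 1), which is
   exactly x / (K + 1) < N + 1 and N <= x / K. *)

Lemma is_greatest_Z_succ {P : Z -> Prop} {k : Z} :
  is_greatest_Z P k -> ~ P (k + 1)%Z.
Proof. intros [_ Hmax] Hk1. specialize (Hmax _ Hk1). lia. Qed.

Lemma le_floorR (t : R) (n : Z) : (n <= floorR t)%Z <-> IZR n <= t.
Proof.
  unfold floorR. destruct (base_Int_part t) as [Hle Hgt]. split; intros H.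
  - apply IZR_le in H. lra.
  - assert (Hlt : IZR n < IZR (Int_part t + 1)) by (rewrite plus_IZR; lra).
    apply lt_IZR in Hlt. lia.
Qed.

Lemma floorR_le (t : R) (n : Z) : t < IZR n + 1 -> (floorR t <= n)%Z.
Proof.
  intros Ht. apply Z.nlt_ge. intros Hlt.
  apply Zlt_le_succ, le_floorR in Hlt. rewrite succ_IZR in Hlt. lra.
Qed.

Lemma le_div_iff (a b c : R) : 0 < c -> a <= b / c <-> a * c <= b.
Proof.
  intros Hc. unfold Rdiv. split; intros H.
  - replace b with (b * / c * c) by (field; lra).
    apply Rmult_le_compat_r; lra.
  - replace a with (a * c * / c) by (field; lra).
    apply Rmult_le_compat_r; [left; apply Rinv_0_lt_compat|]; lra.
Qed.

Lemma mul_le_of_bounds (d x k n : R) :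
  0 < d -> 0 <= n ->
  (k - d) * k <= d * x -> n * (n + 1) * d <= x ->
  n * k <= x.
Proof.
  intros Hd Hn HK HN.
  destruct (Rle_lt_dec ((n + 1) * d) k) as [Hbig | Hsmall].
  - assert (Hnk : n * d * k <= (k - d) * k).
    { apply Rmult_le_compat_r; nra. }
    nra.
  - nra.
Qed.

Lemma lt_mul_of_bounds (d x k n : R) :
  0 < d -> 0 <= n -> 0 <= k ->
  d * x < (k + 1 - d) * (k + 1) -> x < (n + 1) * (n + 2) * d ->
  x < (n + 1) * (k + 1).
Proof.
  intros Hd Hn Hk HK HN.
  destruct (Rle_lt_dec ((n + 2) * d) (k + 1)) as [Hbig | Hsmall].
  - nra.
  - assert (Hdk : (k + 1 - d) * (k + 1) <= (n + 1) * d * (k + 1)) by nra.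
    nra.
Qed.

Theorem proposition4 (d : Z) (x : R) (K N : Z) :
  (0 < d)%Z -> IZR d <= x ->
  is_greatest_Z (fun k => IZR ((k - d) * k) <= IZR d * x) K ->
  is_greatest_Z (fun n => IZR (n * (n + 1)) <= x / IZR d) N ->
  (floorR (x / IZR (K + 1)) <= N /\ N <= floorR (x / IZR K))%Z.
Proof.
  intros Hd Hdx HK HN.
  pose proof (is_greatest_Z_succ HK) as HK1.
  pose proof (is_greatest_Z_succ HN) as HN1.
  destruct HK as [HK HKmax], HN as [HN HNmax].
  assert (Hdpos : 0 < IZR d) by (apply IZR_lt; lia).
  assert (HdK : (d <= K)%Z).
  { apply HKmax. rewrite Z.sub_diag. simpl. nra. }
  assert (HN0 : (0 <= N)%Z).
  { apply HNmax, le_div_iff; simpl; lra. }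
  apply IZR_le in HdK, HN0.
  rewrite le_div_iff in HN, HN1 by exact Hdpos.
  apply Rnot_le_lt in HK1, HN1.
  rewrite !mult_IZR, ?minus_IZR, !plus_IZR in *.
  replace (IZR N + 1 + 1) with (IZR N + 2) in HN1 by ring.
  split.
  - apply floorR_le, Rnot_le_lt. rewrite le_div_iff by lra.
    apply Rlt_not_le, (lt_mul_of_bounds (IZR d)); lra.
  - apply le_floorR, le_div_iff; [lra|].
    apply (mul_le_of_bounds (IZR d)); lra.
Qed.
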